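(* Let $X$ have a pdf $f$ satisfying Conditions (A) and (B) below, and let $D>0$. Let $H^*(D)=\inf\{H[Q(X)]: D(Q)\le D\}$ and $A^*(D)=\inf\{\mathrm{AoI}(S_{\mathrm z},Q,F^* ): D(Q)\le D\}$, both infima taken over quantizers. Then $$\tfrac32 H^*(D)\le A^*(D),$$ and, for any $\delta>0$ with $D(Q_{\mathrm{uni}}^\delta)\le D$, $$A^*(D)\le \mathrm{AoI}(S_{\mathrm z},Q_{\mathrm{uni}}^\delta,F_{\mathrm s}).$$
   Context: Let $X$ be a real random variable with pdf $f$. Condition (A): $f$ is continuous and differentiable, and its support is a bounded interval $I$. Condition (B): $\int_I f\log_2^2 f\,dx$ and $-\int_I f\log_2 f\,dx$ exist and are finite. Quantizers. A quantizer $Q$ partitions $I$ into intervals $[a_{i-1},a_i]$ with representation points $c_i$. Write $p_i=P(X\in[a_{i-1},a_i])$. The output entropy is $H[Q(X)]=-\sum_ip_i\log_2p_i$, and the distortion is $D(Q)=\sum_i\int_{a_{i-1}}^{a_i}(x-c_i)^2f(x)\,dx$. The uniform quantizer $Q_{\mathrm{uni}}^\delta$ partitions $I$ into consecutive cells of length $\delta$, with midpoint representation points. Codes. A real-valued code assigns lengths $l_i\in\mathbb R^+$ to the cells, subject to $\sum_i2^{-l_i}\le1$. The random codeword length is $L=l_i$ when $X$ is in cell $i$. Objective. Under zero-wait sampling, $\mathrm{AoI}(S_{\mathrm z},Q,l)=\frac{E[L^2]}{2E[L]}+E[L]$, and $\mathrm{AoI}(S_{\mathrm z},Q,F^* )=\inf_l\mathrm{AoI}(S_{\mathrm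 z},Q,l)$, the infimum over real-valued codes. $F_{\mathrm s}$ denotes the real-valued Shannon code $l_i=-\log_2p_i$. *)

From Stdlib Require Import Reals List.
From Coquelicot Require Import Coquelicot.
Open Scope R_scope.

(* base-2 logarithm; note Stdlib's ln 0 = 0, so p * log2 p = 0 at p = 0
   (the usual 0 log 0 = 0 convention). *)
Definition log2 (x : R) : R := ln x / ln 2.

Definition sumN (N : nat) (g : nat -> R) : R :=
  fold_right (fun i acc => g i + acc) 0 (seq 0 N).

Definition is_pdf_on (f : R -> R) (a b : R) : Prop :=
  a < b /\
  (forall x, 0 <= f x) /\
  (forall x, (x < a \/ b < x) -> f x = 0) /\
  (* the support (closure of {f > 0}) is all of [a,b] *)
  (forall x y, a <= x -> x < y -> y <= b -> exists z, x < z < y /\ 0 < f z) /\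
  ex_RInt f a b /\ RInt f a b = 1.

(* Condition (A): f continuous and differentiable on I (one-sided at the
   endpoints), support a bounded interval I = [a,b]. *)
Definition condA (f : R -> R) (a b : R) : Prop :=
  is_pdf_on f a b /\
  (forall x, a <= x <= b ->
     filterlim f (within (fun y => a <= y <= b) (locally x)) (locally (f x))) /\
  (forall x, a <= x <= b -> exists l : R,
     filterlim (fun y => (f y - f x) / (y - x))
       (within (fun y => a <= y <= b /\ y <> x) (locally x)) (locally l)).

Definition condB (f : R -> R) (a b : R) : Prop :=
  ex_RInt (fun x => f x * (log2 (f x)) ^ 2) a b /\
  ex_RInt (fun x => f x * log2 (f x)) a b.

(* A quantizer with N cells: cell i (0 <= i < N) is [bp i, bp (i+1)],
   with representation point rp i. *)
Record quantizer := Quantizer {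
  qN : nat;
  bp : nat -> R;
  rp : nat -> R
}.

Definition valid_quantizer (a b : R) (Q : quantizer) : Prop :=
  (1 <= qN Q)%nat /\ bp Q 0 = a /\ bp Q (qN Q) = b /\
  (forall i, (i < qN Q)%nat -> bp Q i < bp Q (S i)).

Definition cell_prob (f : R -> R) (Q : quantizer) (i : nat) : R :=
  RInt f (bp Q i) (bp Q (S i)).

Definition out_entropy (f : R -> R) (Q : quantizer) : R :=
  - sumN (qN Q) (fun i => cell_prob f Q i * log2 (cell_prob f Q i)).

Definition distortion (f : R -> R) (Q : quantizer) : R :=
  sumN (qN Q) (fun i => RInt (fun x => (x - rp Q i) ^ 2 * f x) (bp Q i) (bp Q (S i))).

Definition ceilR (x : R) : Z := (- (up (- x) - 1))%Z.

Definition uniform_quantizer (a b delta : R) : quantizer :=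
  let bpt := fun i : nat => Rmin (a + INR i * delta) b in
  Quantizer (Z.to_nat (ceilR ((b - a) / delta)))
            bpt
            (fun i => (bpt i + bpt (S i)) / 2).

(* real-valued code: lengths l_i in R^+ with Kraft sum_i 2^(-l_i) <= 1 *)
Definition valid_code (Q : quantizer) (l : nat -> R) : Prop :=
  (forall i, (i < qN Q)%nat -> 0 < l i) /\
  sumN (qN Q) (fun i => Rpower 2 (- l i)) <= 1.

Definition EL (f : R -> R) (Q : quantizer) (l : nat -> R) : R :=
  sumN (qN Q) (fun i => cell_prob f Q i * l i).

Definition EL2 (f : R -> R) (Q : quantizer) (l : nat -> R) : R :=
  sumN (qN Q) (fun i => cell_prob f Q i * (l i) ^ 2).

Definition AoI_zw (f : R -> R) (Q : quantizer) (l : nat -> R) : R :=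
  EL2 f Q l / (2 * EL f Q l) + EL f Q l.

Definition AoI_opt (f : R -> R) (Q : quantizer) : Rbar :=
  Glb_Rbar (fun v => exists l, valid_code Q l /\ v = AoI_zw f Q l).

Definition shannon_code (f : R -> R) (Q : quantizer) : nat -> R :=
  fun i => - log2 (cell_prob f Q i).

Definition Hstar (f : R -> R) (a b D : R) : Rbar :=
  Glb_Rbar (fun h => exists Q, valid_quantizer a b Q /\ distortion f Q <= D /\
                                h = out_entropy f Q).

Definition Astar (f : R -> R) (a b D : R) : Rbar :=
  Glb_Rbar (fun v => exists Q, valid_quantizer a b Q /\ distortion f Q <= D /\
                                Finite v = AoI_opt f Q).

From Stdlib Require Import Reals Lra Lia ZArith List.
From Coquelicot Require Import Coquelicot.
Open Scope R_scope.

(* For every quantizer and every real-valued code, Gibbs' inequality and Kraft's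
   inequality give H[Q(X)] <= E[L], and E[L^2] >= E[L]^2 gives
   AoI = E[L^2] / (2 E[L]) + E[L] >= 3/2 E[L] >= 3/2 H[Q(X)]; the lower bound
   follows by taking infima.  For the upper bound, the uniform quantizer is
   admissible and its optimal AoI is at most that of the Shannon code: with at
   least two cells every cell probability lies in (0,1), because f is continuous
   and its support is all of I, so the Shannon code is a valid code; with a
   single cell the Shannon code has length 0 and AoI 0, the limit of the AoI of
   constant codes of vanishing length. *)

Lemma sumN_0 g : sumN 0 g = 0.
Proof. reflexivity. Qed.

Lemma sumN_S n g : sumN (S n) g = sumN n g + g n.
Proof.
  unfold sumN. rewrite seq_S, fold_right_app; simpl.
  generalize (seq 0 n). induction l as [|i l IH]; simpl; lra.
Qed.

Lemma sumN_ext n g h : (forall i, (i < n)%nat -> g i = h i) -> sumN n g = sumN n h.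
Proof.
  induction n as [|n IH]; intros Hgh; [reflexivity|].
  rewrite !sumN_S, IH, Hgh; auto.
Qed.

Lemma sumN_le n g h : (forall i, (i < n)%nat -> g i <= h i) -> sumN n g <= sumN n h.
Proof.
  induction n as [|n IH]; intros Hgh; [rewrite !sumN_0; lra|].
  rewrite !sumN_S. specialize (IH (fun i Hi => Hgh i ltac:(lia))).
  specialize (Hgh n ltac:(lia)). lra.
Qed.

Lemma sumN_ge0 n g : (forall i, (i < n)%nat -> 0 <= g i) -> 0 <= sumN n g.
Proof.
  intros Hg. replace 0 with (sumN n (fun _ => 0)).
  - now apply sumN_le.
  - induction n as [|n IH]; [reflexivity|]. rewrite sumN_S, IH; [lra|].
    intros i Hi. apply Hg. lia.
Qed.

Lemma sumN_plus n g h : sumN n (fun i => g i + h i) = sumN n g + sumN n h.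
Proof. induction n as [|n IH]; [rewrite !sumN_0; lra|]. rewrite !sumN_S, IH. lra. Qed.

Lemma sumN_scal n c g : sumN n (fun i => c * g i) = c * sumN n g.
Proof. induction n as [|n IH]; [rewrite !sumN_0; lra|]. rewrite !sumN_S, IH. lra. Qed.

Lemma sumN_term_le n g j : (forall i, (i < n)%nat -> 0 <= g i) -> (j < n)%nat ->
  g j <= sumN n g.
Proof.
  induction n as [|n IH]; intros Hg Hj; [lia|]. rewrite sumN_S.
  assert (Hg' : forall i, (i < n)%nat -> 0 <= g i) by (intros i Hi; apply Hg; lia).
  destruct (Nat.eq_dec j n) as [->|Hjn].
  - pose proof (sumN_ge0 n g Hg'). lra.
  - pose proof (IH Hg' ltac:(lia)). pose proof (Hg n ltac:(lia)). lra.
Qed.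

Lemma sumN_pair_le n g i j : (forall k, (k < n)%nat -> 0 <= g k) -> (i < j < n)%nat ->
  g i + g j <= sumN n g.
Proof.
  induction n as [|n IH]; intros Hg Hij; [lia|]. rewrite sumN_S.
  assert (Hg' : forall k, (k < n)%nat -> 0 <= g k) by (intros k Hk; apply Hg; lia).
  destruct (Nat.eq_dec j n) as [->|Hjn].
  - pose proof (sumN_term_le n g i Hg' ltac:(lia)). lra.
  - pose proof (IH Hg' ltac:(lia)). pose proof (Hg n ltac:(lia)). lra.
Qed.

Lemma sumN_term_lt n g i j : (forall k, (k < n)%nat -> 0 <= g k) ->
  (i < n)%nat -> (j < n)%nat -> i <> j -> 0 < g j -> g i < sumN n g.
Proof.
  intros Hg Hi Hj Hij Hgj.
  destruct (Nat.lt_gt_cases i j) as [[Hlt|Hgt] _]; [exact Hij| |].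
  - pose proof (sumN_pair_le n g i j Hg ltac:(lia)). lra.
  - pose proof (sumN_pair_le n g j i Hg ltac:(lia)). lra.
Qed.

Lemma ln2_pos : 0 < ln 2.
Proof. rewrite <- ln_1. apply ln_increasing; lra. Qed.

Lemma sub_le_mult_ln_ratio p q : 0 <= p -> 0 < q -> p - q <= p * (ln p - ln q).
Proof.
  intros [Hp| <-] Hq; [|lra].
  (* [ln (q/p) <= q/p - 1], multiplied by [p] *)
  pose proof (exp_ineq1_le (ln (q / p))) as Hexp.
  rewrite exp_ln in Hexp by (apply Rdiv_lt_0_compat; lra).
  rewrite ln_div in Hexp by lra.
  assert (Hmul : p * (1 + (ln q - ln p)) <= p * (q / p))
    by (apply Rmult_le_compat_l; lra).
  replace (p * (q / p)) with q in Hmul by (field; lra). lra.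
Qed.

Section ProbabilityVector.

Variables (n : nat) (p : nat -> R).
Hypothesis p_ge0 : forall i, (i < n)%nat -> 0 <= p i.
Hypothesis p_sum1 : sumN n p = 1.

Lemma sq_mean_le_mean_sq (l : nat -> R) :
  (sumN n (fun i => p i * l i)) ^ 2 <= sumN n (fun i => p i * l i ^ 2).
Proof.
  set (m := sumN n (fun i => p i * l i)).
  assert (Hvar : 0 <= sumN n (fun i => p i * (l i - m) ^ 2)).
  { apply sumN_ge0. intros i Hi. apply Rmult_le_pos; [auto|apply pow2_ge_0]. }
  rewrite (sumN_ext n _ (fun i => p i * l i ^ 2 +
            ((-2 * m) * (p i * l i) + m ^ 2 * p i))) in Hvar by (intros; ring).
  rewrite !sumN_plus, !sumN_scal, p_sum1 in Hvar. fold m in Hvar. nra.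
Qed.

Lemma gibbs_kraft (l : nat -> R) : sumN n (fun i => Rpower 2 (- l i)) <= 1 ->
  - sumN n (fun i => p i * log2 (p i)) <= sumN n (fun i => p i * l i).
Proof.
  intros Hkraft. pose proof ln2_pos.
  assert (Hterm : sumN n (fun i => / ln 2 * (p i + -1 * Rpower 2 (- l i))) <=
                  sumN n (fun i => p i * log2 (p i) + p i * l i)).
  { apply sumN_le. intros i Hi.
    pose proof (sub_le_mult_ln_ratio (p i) (Rpower 2 (- l i)) (p_ge0 i Hi)
                  (exp_pos _)) as Hi'.
    rewrite ln_Rpower in Hi'. unfold log2.
    apply Rmult_le_reg_l with (ln 2); [lra|].
    replace (ln 2 * (/ ln 2 * (p i + -1 * Rpower 2 (- l i))))
      with (p i - Rpower 2 (- l i)) by (field; lra).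
    replace (ln 2 * (p i * (ln (p i) / ln 2) + p i * l i))
      with (p i * (ln (p i) - - l i * ln 2)) by (field; lra).
    exact Hi'. }
  rewrite sumN_scal, !sumN_plus, sumN_scal, p_sum1 in Hterm.
  assert (0 <= / ln 2 * (1 + -1 * sumN n (fun i => Rpower 2 (- l i)))).
  { apply Rmult_le_pos; [left; apply Rinv_0_lt_compat|]; lra. }
  lra.
Qed.

End ProbabilityVector.

Lemma three_halves_le_aoi m s : 0 <= m -> m ^ 2 <= s -> 3 / 2 * m <= s / (2 * m) + m.
Proof.
  intros Hm Hs. destruct (Req_dec m 0) as [->|Hm0].
  - (* Stdlib's junk value [s / 0 = 0] *)
    replace (2 * 0) with 0 by ring. rewrite Rdiv_0_r. lra.
  - replace (3 / 2 * m) with (m ^ 2 / (2 * m) + m) by (field; lra).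
    apply Rplus_le_compat_r, Rmult_le_compat_r; [|exact Hs].
    left; apply Rinv_0_lt_compat; lra.
Qed.

Lemma ex_RInt_subinterval (f : R -> R) a b x y :
  a <= x -> x <= y -> y <= b -> ex_RInt f a b -> ex_RInt f x y.
Proof.
  intros Hax Hxy Hyb Hf.
  apply (ex_RInt_Chasles_1 f _ _ b); [lra|].
  apply (ex_RInt_Chasles_2 f a); [lra|exact Hf].
Qed.

Section Quantizer.

Variables (a b : R) (Q : quantizer).
Hypothesis HQ : valid_quantizer a b Q.

Lemma bp_le i j : (i <= j <= qN Q)%nat -> bp Q i <= bp Q j.
Proof.
  destruct HQ as (_ & _ & _ & Hincr). intros Hij.
  induction j as [|j IH].
  - replace i with 0%nat by lia. lra.
  - destruct (Nat.eq_dec i (S j)) as [->|Hi]; [lra|].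
    specialize (Hincr j ltac:(lia)). specialize (IH ltac:(lia)). lra.
Qed.

Lemma bp_bounds i : (i <= qN Q)%nat -> a <= bp Q i <= b.
Proof.
  pose proof HQ as (_ & H0 & HN & _). intros Hi.
  rewrite <- H0, <- HN at 1. split; apply bp_le; lia.
Qed.

Lemma cell_subinterval i : (i < qN Q)%nat ->
  a <= bp Q i /\ bp Q i < bp Q (S i) /\ bp Q (S i) <= b.
Proof.
  intros Hi. pose proof (bp_bounds i ltac:(lia)). pose proof (bp_bounds (S i) Hi).
  destruct HQ as (_ & _ & _ & Hincr). specialize (Hincr i Hi). lra.
Qed.

Variable f : R -> R.
Hypothesis Hf : is_pdf_on f a b.

Lemma ex_RInt_cell i : (i < qN Q)%nat -> ex_RInt f (bp Q i) (bp Q (S i)).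
Proof.
  intros Hi. destruct (cell_subinterval i Hi) as (? & ? & ?).
  apply (ex_RInt_subinterval f a b); try lra. apply Hf.
Qed.

Lemma cell_prob_ge0 i : (i < qN Q)%nat -> 0 <= cell_prob f Q i.
Proof.
  intros Hi. destruct (cell_subinterval i Hi) as (? & ? & ?).
  apply RInt_ge_0; [lra | apply ex_RInt_cell, Hi | intros; apply Hf].
Qed.

Lemma sumN_cell_prob_partial n : (n <= qN Q)%nat ->
  ex_RInt f a (bp Q n) /\ sumN n (cell_prob f Q) = RInt f a (bp Q n).
Proof.
  pose proof HQ as (_ & H0 & _ & _).
  induction n as [|n IH]; intros Hn.
  - rewrite H0, RInt_point. split; [apply ex_RInt_point | reflexivity].
  - destruct (IH ltac:(lia)) as [Hex Hsum].
    pose proof (ex_RInt_cell n Hn) as Hcell.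
    rewrite sumN_S, Hsum. unfold cell_prob.
    split; [apply (ex_RInt_Chasles f _ (bp Q n)); assumption|].
    exact (RInt_Chasles f _ _ _ Hex Hcell).
Qed.

Lemma sumN_cell_prob : sumN (qN Q) (cell_prob f Q) = 1.
Proof.
  destruct (sumN_cell_prob_partial (qN Q) (le_n _)) as [_ ->].
  destruct HQ as (_ & _ & -> & _). apply Hf.
Qed.

Section Code.

Variable l : nat -> R.
Hypothesis Hl : valid_code Q l.

Lemma EL_ge0 : 0 <= EL f Q l.
Proof.
  apply sumN_ge0. intros i Hi.
  pose proof (cell_prob_ge0 i Hi). pose proof (proj1 Hl i Hi). nra.
Qed.

Lemma entropy_le_EL : out_entropy f Q <= EL f Q l.
Proof.
  apply gibbs_kraft; [exact cell_prob_ge0 | exact sumN_cell_prob | apply Hl].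
Qed.

Lemma three_halves_EL_le_AoI : 3 / 2 * EL f Q l <= AoI_zw f Q l.
Proof.
  apply three_halves_le_aoi; [exact EL_ge0|].
  apply sq_mean_le_mean_sq; [exact cell_prob_ge0 | exact sumN_cell_prob].
Qed.

End Code.

End Quantizer.

Lemma filterlim_within_ge_half (f : R -> R) (D : R -> Prop) z :
  filterlim f (within D (locally z)) (locally (f z)) -> 0 < f z ->
  exists r, 0 < r /\ forall w, D w -> Rabs (w - z) < r -> f z / 2 <= f w.
Proof.
  intros Hlim Hfz.
  destruct (proj1 (filterlim_locally f (f z)) Hlim (mkposreal (f z / 2) ltac:(lra)))
    as [r Hr].
  exists r. split; [apply cond_pos|]. intros w Hw Hwz.
  specialize (Hr w Hwz Hw). change (Rabs (f w - f z) < f z / 2) in Hr.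
  apply Rabs_def2 in Hr. lra.
Qed.

Lemma RInt_gt_0_of_lower_bound (f : R -> R) x y u v c :
  x <= u -> u < v -> v <= y -> 0 < c ->
  (forall w, x <= w <= y -> 0 <= f w) -> (forall w, u <= w <= v -> c <= f w) ->
  ex_RInt f x y -> 0 < RInt f x y.
Proof.
  intros Hxu Huv Hvy Hc Hf0 Hfc Hf.
  assert (Hxu' : ex_RInt f x u) by (apply (ex_RInt_subinterval f x y); lra || auto).
  assert (Huv' : ex_RInt f u v) by (apply (ex_RInt_subinterval f x y); lra || auto).
  assert (Hvy' : ex_RInt f v y) by (apply (ex_RInt_subinterval f x y); lra || auto).
  rewrite <- (RInt_Chasles f x u y Hxu' (ex_RInt_Chasles f u v y Huv' Hvy')),
          <- (RInt_Chasles f u v y Huv' Hvy').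
  assert (0 <= RInt f x u) by (apply RInt_ge_0; auto; intros; apply Hf0; lra).
  assert (0 <= RInt f v y) by (apply RInt_ge_0; auto; intros; apply Hf0; lra).
  assert (Hmid : RInt (fun _ => c) u v <= RInt f u v)
    by (apply RInt_le; auto; [lra | apply ex_RInt_const | intros; apply Hfc; lra]).
  rewrite RInt_const in Hmid. change (scal (v - u) c) with ((v - u) * c) in Hmid.
  assert (0 < (v - u) * c) by (apply Rmult_lt_0_compat; lra).
  unfold plus; simpl. lra.
Qed.

Lemma RInt_gt_0_of_condA (f : R -> R) a b x y : condA f a b ->
  a <= x -> x < y -> y <= b -> 0 < RInt f x y.
Proof.
  intros [(_ & Hf0 & _ & Hsupp & Hex & _) [Hcont _]] Hax Hxy Hyb.
  destruct (Hsupp x y Hax Hxy Hyb) as (z & Hz & Hfz).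
  destruct (filterlim_within_ge_half f _ z (Hcont z ltac:(lra)) Hfz) as (r & Hr & Hfr).
  set (s := Rmin (r / 2) (Rmin ((z - x) / 2) ((y - z) / 2))).
  assert (s <= r / 2 /\ s <= (z - x) / 2 /\ s <= (y - z) / 2) as (Hs1 & Hs2 & Hs3).
  { unfold s. pose proof (Rmin_l (r / 2) (Rmin ((z - x) / 2) ((y - z) / 2))).
    pose proof (Rmin_r (r / 2) (Rmin ((z - x) / 2) ((y - z) / 2))).
    pose proof (Rmin_l ((z - x) / 2) ((y - z) / 2)).
    pose proof (Rmin_r ((z - x) / 2) ((y - z) / 2)). lra. }
  assert (Hs : 0 < s) by (unfold s; repeat apply Rmin_pos; lra).
  apply (RInt_gt_0_of_lower_bound f x y (z - s) (z + s) (f z / 2)); try lra.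
  - intros; apply Hf0.
  - intros w Hw. apply Hfr; [lra|]. apply Rabs_def1; lra.
  - apply (ex_RInt_subinterval f a b); lra || auto.
Qed.

Lemma Glb_Rbar_le_mem (E : R -> Prop) x : E x -> Rbar_le (Glb_Rbar E) x.
Proof. apply (proj1 (Glb_Rbar_correct E)). Qed.

Lemma Glb_Rbar_ge_lb (E : R -> Prop) (m : Rbar) :
  (forall x, E x -> Rbar_le m x) -> Rbar_le m (Glb_Rbar E).
Proof. apply (proj2 (Glb_Rbar_correct E)). Qed.

Lemma Glb_Rbar_le_approx (E : R -> Prop) r :
  (forall eps, 0 < eps -> exists x, E x /\ x <= r + eps) -> Rbar_le (Glb_Rbar E) r.
Proof.
  intros Happrox.
  assert (Hle : forall eps, 0 < eps -> Rbar_le (Glb_Rbar E) (r + eps)).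
  { intros eps Heps. destruct (Happrox eps Heps) as (x & Hx & Hxr).
    apply Rbar_le_trans with x; [apply Glb_Rbar_le_mem, Hx | exact Hxr]. }
  destruct (Glb_Rbar E) as [g| |]; simpl in Hle |- *.
  - apply Rle_plus_epsilon. exact Hle.
  - exact (Hle 1 Rlt_0_1).
  - exact I.
Qed.

Lemma Rbar_mult_le (c r x : R) (y : Rbar) :
  0 < c -> Rbar_le y r -> c * r <= x -> Rbar_le (Rbar_mult c y) x.
Proof.
  intros Hc Hy Hx. destruct y as [y| |]; simpl in Hy |- *; [nra|contradiction|].
  destruct (Rle_dec 0 c) as [Hc'|]; [|lra].
  destruct (Rle_lt_or_eq_dec 0 c Hc'); [exact I|lra].
Qed.

Lemma Rpower2_log2 p : 0 < p -> Rpower 2 (log2 p) = p.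
Proof.
  intros Hp. pose proof ln2_pos. unfold Rpower, log2.
  replace (ln p / ln 2 * ln 2) with (ln p) by (field; lra). now apply exp_ln.
Qed.

Lemma shannon_code_valid (f : R -> R) Q :
  (forall i, (i < qN Q)%nat -> 0 < cell_prob f Q i < 1) ->
  sumN (qN Q) (cell_prob f Q) = 1 -> valid_code Q (shannon_code f Q).
Proof.
  intros Hp Hsum. unfold shannon_code. split.
  - intros i Hi. specialize (Hp i Hi). pose proof ln2_pos.
    assert (ln (cell_prob f Q i) < 0) by (rewrite <- ln_1; apply ln_increasing; lra).
    assert (ln (cell_prob f Q i) / ln 2 < 0) by (apply Rdiv_neg_pos; auto).
    unfold log2. lra.
  - rewrite <- Hsum. right. apply sumN_ext. intros i Hi.
    rewrite Ropp_involutive. apply Rpower2_log2, Hp, Hi.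
Qed.

Section OptimalCode.

Variables (f : R -> R) (a b : R) (Q : quantizer).
Hypothesis HQ : valid_quantizer a b Q.

Lemma cell_prob_pos : condA f a b -> forall i, (i < qN Q)%nat -> 0 < cell_prob f Q i.
Proof.
  intros HA i Hi. destruct (cell_subinterval a b Q HQ i Hi) as (? & ? & ?).
  apply (RInt_gt_0_of_condA f a b); assumption.
Qed.

Lemma cell_prob_lt_1 : condA f a b -> (2 <= qN Q)%nat ->
  forall i, (i < qN Q)%nat -> cell_prob f Q i < 1.
Proof.
  intros HA HN i Hi. pose proof (proj1 HA) as Hf.
  rewrite <- (sumN_cell_prob a b Q HQ f Hf).
  apply (sumN_term_lt _ _ i (if Nat.eqb i 0 then 1%nat else 0%nat));
    [exact (cell_prob_ge0 a b Q HQ f Hf) | exact Hi | | | apply (cell_prob_pos HA)];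
    destruct (Nat.eqb_spec i 0); lia.
Qed.

Variable Hf : is_pdf_on f a b.

Lemma AoI_opt_ge_entropy : Rbar_le (3 / 2 * out_entropy f Q) (AoI_opt f Q).
Proof.
  apply Glb_Rbar_ge_lb. intros x (l & Hl & ->). simpl.
  pose proof (entropy_le_EL a b Q HQ f Hf l Hl).
  pose proof (three_halves_EL_le_AoI a b Q HQ f Hf l Hl). lra.
Qed.

Lemma AoI_opt_ge0 : Rbar_le 0 (AoI_opt f Q).
Proof.
  apply Glb_Rbar_ge_lb. intros x (l & Hl & ->). simpl.
  pose proof (EL_ge0 a b Q HQ f Hf l Hl).
  pose proof (three_halves_EL_le_AoI a b Q HQ f Hf l Hl). lra.
Qed.

Section SingleCell.

Hypothesis HN : qN Q = 1%nat.

Let cell_prob_0 : cell_prob f Q 0 = 1.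
Proof.
  pose proof (sumN_cell_prob a b Q HQ f Hf) as Hsum.
  rewrite HN, sumN_S, sumN_0 in Hsum. lra.
Qed.

(* The constant code of length [2/3 eps] has AoI [eps]. *)
Lemma AoI_opt_single_cell : Rbar_le (AoI_opt f Q) 0.
Proof.
  apply Glb_Rbar_le_approx. intros eps Heps.
  exists eps. split; [|lra].
  exists (fun _ => 2 / 3 * eps). split.
  - split; [intros; lra|].
    rewrite HN, sumN_S, sumN_0, Rplus_0_l, <- (Rpower_O 2) by lra.
    left. apply Rpower_lt; lra.
  - unfold AoI_zw, EL, EL2. rewrite HN, !sumN_S, !sumN_0, cell_prob_0. field. lra.
Qed.

Lemma AoI_shannon_single_cell : AoI_zw f Q (shannon_code f Q) = 0.
Proof.
  unfold AoI_zw, EL, EL2, shannon_code, log2.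
  rewrite HN, !sumN_S, !sumN_0, cell_prob_0, ln_1.
  replace (0 / ln 2) with 0 by (unfold Rdiv; ring).
  rewrite !Ropp_0, !Rmult_0_r, !Rplus_0_l, Rmult_0_r, Rdiv_0_r. ring.
Qed.

End SingleCell.

Lemma AoI_opt_le_shannon : condA f a b ->
  Rbar_le (AoI_opt f Q) (AoI_zw f Q (shannon_code f Q)).
Proof.
  intros HA. destruct (Nat.eq_dec (qN Q) 1) as [HN|HN].
  - rewrite (AoI_shannon_single_cell HN). exact (AoI_opt_single_cell HN).
  - apply Glb_Rbar_le_mem. exists (shannon_code f Q). split; [|reflexivity].
    apply shannon_code_valid; [|exact (sumN_cell_prob a b Q HQ f Hf)].
    pose proof (proj1 HQ).
    intros i Hi. split; [apply cell_prob_pos | apply cell_prob_lt_1]; auto; lia.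
Qed.

End OptimalCode.

Lemma ceilR_spec x : x <= IZR (ceilR x) < x + 1.
Proof.
  unfold ceilR. destruct (archimed (- x)) as [H1 H2].
  rewrite opp_IZR, minus_IZR. lra.
Qed.

Lemma uniform_quantizer_valid a b delta : a < b -> 0 < delta ->
  valid_quantizer a b (uniform_quantizer a b delta).
Proof.
  intros Hab Hdelta. unfold valid_quantizer, uniform_quantizer; cbn [qN bp].
  set (x := (b - a) / delta).
  assert (Hx : b - a = x * delta) by (unfold x; field; lra).
  assert (Hx0 : 0 < x) by (unfold x; apply Rdiv_lt_0_compat; lra).
  destruct (ceilR_spec x) as [Hceil1 Hceil2].
  assert (Hpos : (0 < ceilR x)%Z) by (apply lt_IZR; lra).
  assert (HN : INR (Z.to_nat (ceilR x)) = IZR (ceilR x))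
    by (rewrite INR_IZR_INZ, Z2Nat.id; [reflexivity | lia]).
  split; [|split; [|split]].
  - apply INR_le. rewrite HN. apply IZR_le. lia.
  - rewrite Rmult_0_l, Rplus_0_r. apply Rmin_left. lra.
  - apply Rmin_right. rewrite HN. nra.
  - intros i Hi.
    (* [i] is an integer below [ceil x], hence [i <= ceil x - 1 < x] *)
    assert (Hix : INR i < x).
    { assert (Hiz : (Z.of_nat i <= ceilR x - 1)%Z) by lia.
      apply IZR_le in Hiz. rewrite minus_IZR, <- INR_IZR_INZ in Hiz. lra. }
    rewrite S_INR, Rmin_left by nra. apply Rmin_glb_lt; nra.
Qed.

Theorem lemma2 (f : R -> R) (a b D : R) :
  condA f a b -> condB f a b -> 0 < D ->
  Rbar_le (Rbar_mult (3 / 2) (Hstar f a b D)) (Astar f a b D) /\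
  (forall delta : R, 0 < delta ->
     distortion f (uniform_quantizer a b delta) <= D ->
     Rbar_le (Astar f a b D)
       (Finite (AoI_zw f (uniform_quantizer a b delta)
                  (shannon_code f (uniform_quantizer a b delta))))).
Proof.
  intros HA _ _. pose proof (proj1 HA) as Hf. split.
  - apply Glb_Rbar_ge_lb. intros x (Q & HQ & Hdist & Hx).
    apply (Rbar_mult_le _ (out_entropy f Q)); [lra | apply Glb_Rbar_le_mem; eauto |].
    pose proof (AoI_opt_ge_entropy f a b Q HQ Hf) as Hent.
    rewrite <- Hx in Hent. exact Hent.
  - intros delta Hdelta Hdist.
    pose proof (uniform_quantizer_valid a b delta (proj1 Hf) Hdelta) as HU.
    pose proof (AoI_opt_ge0 f a b _ HU Hf) as Hge0.
    pose proof (AoI_opt_le_shannon f a b _ HU Hf HA) as Hle.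
    destruct (AoI_opt f (uniform_quantizer a b delta)) as [v| |] eqn:Hv;
      simpl in Hge0, Hle; try contradiction.
    apply Rbar_le_trans with v; [|exact Hle].
    apply Glb_Rbar_le_mem. exists (uniform_quantizer a b delta). auto.
Qed.
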